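(* Let $X,Y$ be Banach lattices and $S\colon X\to Y$ convex. Then the following are equivalent: (i) $S$ is continuous; (ii) for every $x\in X$ there exists $r>0$ such that $\|S_x\|_r<\infty$.
   Context: An operator $S\colon X\to Y$ is convex if $S(\lambda x+(1-\lambda)y)\le\lambda Sx+(1-\lambda)Sy$ for all $x,y\in X$, $\lambda\in[0,1]$. $S_xy:=S(x+y)-Sx$ for $x,y\in X$, and $\|T\|_r:=\sup_{\|y\|\le r}\|Ty\|$. *)

From HB Require Import structures.
From mathcomp Require Import all_boot all_order all_algebra.
From mathcomp Require Import all_classical all_reals all_analysis.
Set Implicit Arguments. Unset Strict Implicit. Unset Printing Implicit Defensive.
Import Order.TTheory GRing.Theory Num.Theory.
Import numFieldNormedType.Exports.
Local Open Scope ring_scope.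

Definition is_sup (T : Type) (le : T -> T -> Prop) (x y z : T) : Prop :=
  [/\ le x z, le y z & forall w, le x w -> le y w -> le z w].

(* A Banach lattice: a real Banach space X (completeNormedModType over a
   realType) with a partial order le that is a lattice order (every pair has
   a supremum), compatible with the vector operations, and such that
   |x| <= |y| implies ||x|| <= ||y||, where |x| = x \/ (-x). *)
Definition banach_lattice (R : realType) (X : completeNormedModType R)
    (le : X -> X -> Prop) : Prop :=
  [/\ (forall x, le x x),
      (forall x y, le x y -> le y x -> x = y),
      (forall x y z, le x y -> le y z -> le x z)
    & (forall x y, exists z, is_sup le x y z)] /\
  [/\
      (forall x y z, le x y -> le (x + z) (y + z)),
      (forall (a : R) x y, 0 <= a -> le x y -> le (a *: x) (a *: y))
    & (forall x y ax ay, is_sup le x (- x) ax -> is_sup le y (- y) ay ->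
         le ax ay -> `|x| <= `|y|)].

Definition convex_op (R : realType) (X Y : normedModType R)
    (leY : Y -> Y -> Prop) (S : X -> Y) : Prop :=
  forall (x y : X) (l : R), 0 <= l <= 1 ->
    leY (S (l *: x + (1 - l) *: y)) (l *: S x + (1 - l) *: S y).

Definition Sx (R : realType) (X Y : normedModType R) (S : X -> Y) (x : X)
  : X -> Y := fun y => S (x + y) - S x.

(* ||T||_r < oo, i.e. sup_{||y|| <= r} ||T y|| is finite *)
Definition bounded_on_ball (R : realType) (X Y : normedModType R)
    (T : X -> Y) (r : R) : Prop :=
  exists M : R, forall y : X, `|y| <= r -> `|T y| <= M.

(* For 0 < t <= 1, convexity of S along the segment from x to x + y/t gives
   S_x y <= t S_x (y/t), and convexity at the midpoint of x - y and x + y gives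
   - S_x (-y) <= S_x y.  With t = ||y||/r this squeezes S_x y between two
   vectors of norm at most t ||S_x||_r, and since the norm of a Banach lattice
   is monotone for |.|, ||S_x y|| <= 2 ||S_x||_r ||y|| / r.  Hence a bounded
   ||S_x||_r makes S continuous at x; the converse is continuity at x itself. *)
From HB Require Import structures.
From mathcomp Require Import all_boot all_order all_algebra.
From mathcomp Require Import all_classical all_reals all_analysis.
From mathcomp Require Import ring lra.
Set Implicit Arguments. Unset Strict Implicit. Unset Printing Implicit Defensive.
Import Order.TTheory GRing.Theory Num.Theory.
Import numFieldNormedType.Exports.
Local Open Scope ring_scope.

Section BanachLattice.
Variables (R : realType) (Y : completeNormedModType R) (le : Y -> Y -> Prop).
Hypothesis bl : banach_lattice le.

Lemma lat_le_refl (x : Y) : le x x.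
Proof. by case: bl => -[refl _ _ _]. Qed.

Lemma lat_le_trans (x y z : Y) : le x y -> le y z -> le x z.
Proof. by case: bl => -[_ _ trans _] _; apply: trans. Qed.

Lemma lat_sup_ex (x y : Y) : exists z, is_sup le x y z.
Proof. by case: bl => -[_ _ _ sup]. Qed.

Lemma lat_leD2r (x y z : Y) : le x y -> le (x + z) (y + z).
Proof. by case: bl => _ -[addc _ _]; apply: addc. Qed.

Lemma lat_leZ2l (a : R) (x y : Y) : 0 <= a -> le x y -> le (a *: x) (a *: y).
Proof. by case: bl => _ -[_ scalc _]; apply: scalc. Qed.

Lemma lat_leN2 (x y : Y) : le x y -> le (- y) (- x).
Proof.
by move=> /(lat_leD2r (- x - y)); rewrite addrA subrr add0r addrCA subrr addr0.
Qed.

Lemma lat_abs_ge0 (x u : Y) : is_sup le x (- x) u -> le 0 u.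
Proof.
case=> xu Nxu _.
have u2_ge0 : le 0 (u + u).
  apply: (@lat_le_trans _ (u - x)); first by rewrite -(subrr x); exact: lat_leD2r.
  by rewrite addrC; exact: lat_leD2r.
have u2K : (2^-1 : R) *: (u + u) = u.
  by rewrite -mulr2n -[u *+ 2]scaler_nat scalerA mulVf ?scale1r // pnatr_eq0.
by rewrite -u2K -(scaler0 _ 2^-1); apply: lat_leZ2l; rewrite ?invr_ge0.
Qed.

Lemma lat_norm_le_abs (x u v w : Y) :
  is_sup le x (- x) u -> is_sup le v (- v) w -> le u w -> `|x| <= `|v|.
Proof. by case: bl => _ -[_ _ normc]; apply: normc. Qed.

(* The modulus u of x is positive, hence its own modulus. *)
Lemma lat_norm_abs_le (x u : Y) : is_sup le x (- x) u -> `|u| <= `|x|.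
Proof.
move=> xu; have u_ge0 := lat_abs_ge0 xu.
have [w uw] := lat_sup_ex u (- u).
apply: (lat_norm_le_abs uw xu); case: uw => _ _; apply; first exact: lat_le_refl.
by apply: (lat_le_trans _ u_ge0); rewrite -oppr0; exact: lat_leN2.
Qed.

Lemma lat_norm_between (a z b : Y) : le a z -> le z b -> `|z| <= `|a| + `|b|.
Proof.
move=> az zb.
have [u au] := lat_sup_ex a (- a); have [v bv] := lat_sup_ex b (- b).
have [p zp] := lat_sup_ex z (- z); have [q uvq] := lat_sup_ex (u + v) (- (u + v)).
have u_le : le u (u + v).
  by have := lat_leD2r u (lat_abs_ge0 bv); rewrite add0r addrC.
have v_le : le v (u + v) by have := lat_leD2r v (lat_abs_ge0 au); rewrite add0r.
have z_le : le z (u + v).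
  by apply: (lat_le_trans _ v_le); apply: (lat_le_trans zb); case: bv.
have Nz_le : le (- z) (u + v).
  by apply: (lat_le_trans _ u_le); apply: (lat_le_trans (lat_leN2 az)); case: au.
have z_le_uv : `|z| <= `|u + v|.
  apply: (lat_norm_le_abs zp uvq); case: zp => _ _ /(_ _ z_le Nz_le) p_le.
  by apply: (lat_le_trans p_le); case: uvq.
apply: (le_trans z_le_uv); apply: le_trans (ler_normD _ _) _.
by apply: lerD; [exact: lat_norm_abs_le au | exact: lat_norm_abs_le bv].
Qed.

End BanachLattice.

Section ConvexOperator.
Variables (R : realType) (X : normedModType R) (Y : completeNormedModType R).
Variables (le : Y -> Y -> Prop) (S : X -> Y).
Hypotheses (bl : banach_lattice le) (cvxS : convex_op le S).

Lemma Sx_le_scale (t : R) (x y : X) :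
  0 < t <= 1 -> le (Sx S x y) (t *: Sx S x (t^-1 *: y)).
Proof.
move=> /andP[t_gt0 t_le1].
have t_itv : 0 <= t <= 1 by rewrite (ltW t_gt0) t_le1.
have := cvxS (x + t^-1 *: y) x t_itv.
have -> : t *: (x + t^-1 *: y) + (1 - t) *: x = x + y.
  rewrite scalerDr scalerA mulfV ?gt_eqF // scale1r scalerBl scale1r.
  by rewrite addrAC addrCA subrr addr0 addrC.
move=> /(lat_leD2r bl (- S x)); rewrite /Sx.
by rewrite scalerBr scalerBl scale1r addrCA [_ + _ - S x]addrC addKr.
Qed.

Lemma SxN_le (x y : X) : le (- Sx S x (- y)) (Sx S x y).
Proof.
have half_le1 : 0 <= (2^-1 : R) <= 1.
  by rewrite invr_ge0 ler0n /= invf_le1 // ler1n.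
have := cvxS (x + y) (x - y) half_le1.
have -> : (1 - 2^-1 : R) = 2^-1 by lra.
rewrite -scalerDr addrACA subrr addr0 -mulr2n -[x *+ 2]scaler_nat scalerA.
rewrite mulVf ?pnatr_eq0 // scale1r => /(lat_leZ2l bl (ler0n _ 2)).
rewrite scalerDr !scalerA mulfV ?pnatr_eq0 // !scale1r scaler_nat mulr2n.
move=> /(lat_leD2r bl (- S x - S (x - y))); rewrite /Sx.
by rewrite addrACA subrr add0r opprB addrACA subrr addr0.
Qed.

Lemma norm_Sx_le (x : X) (r M : R) :
  0 < r -> (forall y, `|y| <= r -> `|Sx S x y| <= M) ->
  forall y, `|y| <= r -> `|Sx S x y| <= 2 * M / r * `|y|.
Proof.
move=> r_gt0 SxM y y_le_r.
have [->|y_neq0] := eqVneq y 0; first by rewrite /Sx addr0 subrr !normr0 mulr0.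
pose t := `|y| / r.
have t_gt0 : 0 < t by rewrite divr_gt0 ?normr_gt0.
have t_itv : 0 < t <= 1 by rewrite t_gt0 ler_pdivrMr // mul1r.
have SxM_t w : `|w| = `|y| -> `|t *: Sx S x (t^-1 *: w)| <= t * M.
  move=> wy; rewrite normrZ gtr0_norm //; apply/ler_wpM2l/SxM; first exact: ltW.
  by rewrite normrZ gtr0_norm ?invr_gt0 // wy /t invf_div divfK ?normr_eq0.
have lo := lat_leN2 bl (Sx_le_scale x (- y) t_itv).
apply: le_trans (lat_norm_between bl (lat_le_trans bl lo (SxN_le x y))
  (Sx_le_scale x y t_itv)) _.
have -> : 2 * M / r * `|y| = t * M + t * M by rewrite /t; field; rewrite gt_eqF.
by rewrite normrN; apply: lerD; apply: SxM_t; rewrite ?normrN.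
Qed.

End ConvexOperator.

Lemma Sx_bounded_of_continuous (R : realType) (X Y : normedModType R)
    (S : X -> Y) (x : X) :
  {for x, continuous S} -> exists2 r : R, 0 < r & bounded_on_ball (Sx S x) r.
Proof.
move=> /cvgrPdist_lt /(_ 1 ltr01) /nbhs_ballP [e e_gt0 Sx_lt1].
exists (e / 2); first by rewrite divr_gt0.
exists 1 => y y_le; rewrite /Sx distrC; apply/ltW/Sx_lt1.
rewrite -ball_normE /ball_ /= opprD addNKr normrN.
by apply: le_lt_trans y_le _; rewrite ltr_pdivrMr // ltr_pMr // ltr1n.
Qed.

Lemma continuous_at_of_norm_le_linear (R : realType) (X Y : normedModType R)
    (f : X -> Y) (x : X) (r K : R) :
  0 < r -> (forall z, `|z - x| <= r -> `|f z - f x| <= K * `|z - x|) ->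
  {for x, continuous f}.
Proof.
move=> r_gt0 fK; apply/cvgrPdist_le => e e_gt0.
pose d := Num.min r (e / (`|K| + 1)).
have d_gt0 : 0 < d by rewrite lt_min r_gt0 divr_gt0 // ltr_wpDl.
apply/nbhs_ballP; exists d => // z.
rewrite -ball_normE /ball_ /= lt_min distrC => /andP[/ltW zr ze].
rewrite distrC; apply: le_trans (fK _ zr) _.
apply: (le_trans (ler_wpM2r (normr_ge0 _) (ler_norm K))).
apply: (le_trans (ler_wpM2l (normr_ge0 K) (ltW ze))).
by rewrite mulrA ler_pdivrMr ?ltr_wpDl //; nra.
Qed.

Theorem lemmaA2 (R : realType) (X Y : completeNormedModType R)
    (leX : X -> X -> Prop) (leY : Y -> Y -> Prop) (S : X -> Y) :
  banach_lattice leX -> banach_lattice leY -> convex_op leY S ->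
  (continuous S <-> forall x : X, exists2 r : R, 0 < r & bounded_on_ball (Sx S x) r).
Proof.
move=> _ blY cvxS; split => [contS x | Sx_bounded x].
  exact: Sx_bounded_of_continuous (contS x).
have [r r_gt0 [M SxM]] := Sx_bounded x.
apply: (continuous_at_of_norm_le_linear (K := 2 * M / r) r_gt0) => z zr.
by have := norm_Sx_le blY cvxS r_gt0 SxM zr; rewrite /Sx [x + _]addrC subrK.
Qed.
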